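(* Let $\mathbf{L}$ be a Euclidean modal logic. If $\mathtt{Th}(\mathtt{Fr}(\mathbf{L}))$ is undecidable, then the problem of deciding, given a first-order sentence, whether it is modally definable in $\mathtt{Fr}(\mathbf{L})$ is undecidable.
   Context: A frame is a pair $(W,R)$ with $W$ non-empty and $R\subseteq W\times W$. Modal formulas (propositional variables, $\bot,\neg,\vee,\Box$) have standard Kripke semantics; validity in a frame means truth at all points under all valuations. A (normal) modal logic contains all tautologies and K axioms and is closed under uniform substitution, modus ponens and necessitation; a Euclidean modal logic is one not containing $\bot$ and containing $\Diamond\psi\to\Box\Diamond\psi$ for all $\psi$. $\mathtt{Fr}(\mathbf{L})$ is the class of frames validating $\mathbf{L}$; $\mathtt{Th}(\mathcal{C})$ is the set of first-order sentences (one binary relation symbol $\mathbf{R}$ and equality) valid in all frames of $\mathcal{C}$. A sentence $A$ is modally definable in a class $\mathcal{C}$ if there is a modal formula $\psi$ with $\mathcal{F}\models\psi\iff\mathcal{F}\models A$ for all $\mathcal{F}\in\mathcal{C}$. *)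

From Stdlib Require Import Arith List.
Import ListNotations.

Inductive mform : Type :=
| MVar : nat -> mform
| MBot : mform
| MNeg : mform -> mform
| MOr  : mform -> mform -> mform
| MBox : mform -> mform.

Definition MImp (a b : mform) : mform := MOr (MNeg a) b.
Definition MDia (a : mform) : mform := MNeg (MBox (MNeg a)).

Record frame : Type := Frame {
  fW : Type;
  fR : fW -> fW -> Prop;
  fW_inhabited : inhabited fW
}.

Fixpoint msat (F : frame) (V : nat -> fW F -> Prop) (w : fW F) (a : mform)
  : Prop :=
  match a with
  | MVar n => V n w
  | MBot => False
  | MNeg b => ~ msat F V w b
  | MOr b c => msat F V w b \/ msat F V w c
  | MBox b => forall u, fR F w u -> msat F V u b
  end.

Definition mvalid (F : frame) (a : mform) : Prop :=
  forall (V : nat -> fW F -> Prop) (w : fW F), msat F V w a.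

(* Boolean evaluation treating boxed subformulas as atoms: a formula is a
   (substitution instance of a) propositional tautology iff it evaluates to
   true for every assignment of truth values to variables and to boxed
   subformulas. *)
Fixpoint beval (v : nat -> bool) (b : mform -> bool) (a : mform) : bool :=
  match a with
  | MVar n => v n
  | MBot => false
  | MNeg c => negb (beval v b c)
  | MOr c d => orb (beval v b c) (beval v b d)
  | MBox c => b c
  end.

Definition tautology (a : mform) : Prop :=
  forall v b, beval v b a = true.

Fixpoint msubst (s : nat -> mform) (a : mform) : mform :=
  match a with
  | MVar n => s n
  | MBot => MBot
  | MNeg c => MNeg (msubst s c)
  | MOr c d => MOr (msubst s c) (msubst s d)
  | MBox c => MBox (msubst s c)
  end.

Definition normal_modal_logic (L : mform -> Prop) : Prop :=
  (forall a, tautology a -> L a) /\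
  (forall a b, L (MImp (MBox (MImp a b)) (MImp (MBox a) (MBox b)))) /\
  (forall s a, L a -> L (msubst s a)) /\
  (forall a b, L (MImp a b) -> L a -> L b) /\
  (forall a, L a -> L (MBox a)).

Definition euclidean_logic (L : mform -> Prop) : Prop :=
  normal_modal_logic L /\ ~ L MBot /\
  (forall a, L (MImp (MDia a) (MBox (MDia a)))).

Definition Fr (L : mform -> Prop) (F : frame) : Prop :=
  forall a, L a -> mvalid F a.

Inductive fo : Type :=
| FEq  : nat -> nat -> fo
| FRel : nat -> nat -> fo
| FBot : fo
| FImp : fo -> fo -> fo
| FAll : nat -> fo -> fo.

Fixpoint fsat (F : frame) (rho : nat -> fW F) (A : fo) : Prop :=
  match A with
  | FEq x y => rho x = rho y
  | FRel x y => fR F (rho x) (rho y)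
  | FBot => False
  | FImp B C => fsat F rho B -> fsat F rho C
  | FAll x B => forall d : fW F,
      fsat F (fun y => if Nat.eqb y x then d else rho y) B
  end.

Fixpoint fv (A : fo) : list nat :=
  match A with
  | FEq x y => [x; y]
  | FRel x y => [x; y]
  | FBot => []
  | FImp B C => fv B ++ fv C
  | FAll x B => filter (fun y => negb (Nat.eqb y x)) (fv B)
  end.

Definition sentence (A : fo) : Prop := fv A = [].

Definition fvalid (F : frame) (A : fo) : Prop :=
  forall rho : nat -> fW F, fsat F rho A.

Definition Th (C : frame -> Prop) (A : fo) : Prop :=
  sentence A /\ forall F, C F -> fvalid F A.

Definition modally_definable_in (C : frame -> Prop) (A : fo) : Prop :=
  exists psi : mform, forall F, C F -> (mvalid F psi <-> fvalid F A).

Inductive rf : Type :=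
| RZero : rf
| RSucc : rf
| RProj : nat -> rf
| RComp : rf -> list rf -> rf
| RPrim : rf -> rf -> rf
| RMin  : rf -> rf.

Inductive reval : rf -> list nat -> nat -> Prop :=
| ev_zero : forall v, reval RZero v 0
| ev_succ : forall x v, reval RSucc (x :: v) (S x)
| ev_proj : forall i v, i < length v -> reval (RProj i) v (nth i v 0)
| ev_comp : forall f gs v ws y,
    revals gs v ws -> reval f ws y -> reval (RComp f gs) v y
| ev_prim0 : forall f g v y, reval f v y -> reval (RPrim f g) (0 :: v) y
| ev_primS : forall f g n v y z,
    reval (RPrim f g) (n :: v) y -> reval g (n :: y :: v) z ->
    reval (RPrim f g) (S n :: v) z
| ev_min : forall f v n,
    reval f (n :: v) 0 ->
    (forall m, m < n -> exists k, reval f (m :: v) (S k)) ->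
    reval (RMin f) v n
with revals : list rf -> list nat -> list nat -> Prop :=
| evs_nil : forall v, revals [] v []
| evs_cons : forall g gs v w ws,
    reval g v w -> revals gs v ws -> revals (g :: gs) v (w :: ws).

Definition cpair (x y : nat) : nat := (x + y) * (x + y + 1) / 2 + y.

Fixpoint code (A : fo) : nat :=
  match A with
  | FEq x y => cpair 0 (cpair x y)
  | FRel x y => cpair 1 (cpair x y)
  | FBot => cpair 2 0
  | FImp B C => cpair 3 (cpair (code B) (code C))
  | FAll x B => cpair 4 (cpair x (code B))
  end.

Definition fo_decidable (P : fo -> Prop) : Prop :=
  exists f : rf, forall A, sentence A ->
    (P A -> reval f [code A] 1) /\ (~ P A -> reval f [code A] 0).

(* The sentence [reduct A] says: for every point g, if some point lies outside
   the connected component of g, then A holds in the subframe of the points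
   outside that component.  Frames of a Euclidean logic are closed under
   generated subframes and disjoint unions, and their connected components are
   generated subframes.  If A is valid on Fr(L), then so is [reduct A], which is
   therefore defined by a tautology.  Conversely, [reduct A] holds vacuously on a
   connected frame, so a modal formula defining it is valid on every component
   of every frame of L, hence on every frame of L; so [reduct A] is valid on
   Fr(L), and evaluating it on G + (a component of G) at a point of the added
   component gives A on G.  As [A |-> reduct A] is computable on codes, a decision
   procedure for definability would decide Th(Fr(L)). *)

From Stdlib Require Import Arith List Lia Classical ProofIrrelevance.
Import ListNotations.

(** * Computable functions *)

Record comp1 : Type := Comp1 {
  rf1 : rf; fn1 : nat -> nat;
  rf1_spec : forall x, reval rf1 [x] (fn1 x) }.
Record comp2 : Type := Comp2 {
  rf2 : rf; fn2 : nat -> nat -> nat;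
  rf2_spec : forall x y, reval rf2 [x; y] (fn2 x y) }.
Record comp3 : Type := Comp3 {
  rf3 : rf; fn3 : nat -> nat -> nat -> nat;
  rf3_spec : forall x y z, reval rf3 [x; y; z] (fn3 x y z) }.

Inductive expr : Type :=
| EVar (i : nat)
| EConst (n : nat)
| EApp1 (f : comp1) (a : expr)
| EApp2 (f : comp2) (a b : expr)
| EApp3 (f : comp3) (a b c : expr).

Fixpoint expr_eval (v : list nat) (e : expr) : nat :=
  match e with
  | EVar i => nth i v 0
  | EConst n => n
  | EApp1 f a => fn1 f (expr_eval v a)
  | EApp2 f a b => fn2 f (expr_eval v a) (expr_eval v b)
  | EApp3 f a b c => fn3 f (expr_eval v a) (expr_eval v b) (expr_eval v c)
  end.

Fixpoint const_rf (n : nat) : rf :=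
  match n with 0 => RZero | S n => RComp RSucc [const_rf n] end.

Fixpoint expr_rf (e : expr) : rf :=
  match e with
  | EVar i => RProj i
  | EConst n => const_rf n
  | EApp1 f a => RComp (rf1 f) [expr_rf a]
  | EApp2 f a b => RComp (rf2 f) [expr_rf a; expr_rf b]
  | EApp3 f a b c => RComp (rf3 f) [expr_rf a; expr_rf b; expr_rf c]
  end.

Fixpoint expr_vars_lt (k : nat) (e : expr) : bool :=
  match e with
  | EVar i => i <? k
  | EConst _ => true
  | EApp1 _ a => expr_vars_lt k a
  | EApp2 _ a b => expr_vars_lt k a && expr_vars_lt k b
  | EApp3 _ a b c => expr_vars_lt k a && expr_vars_lt k b && expr_vars_lt k c
  end.

Lemma reval_const_rf n v : reval (const_rf n) v n.
Proof.
  induction n as [|n IH]; cbn [const_rf].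
  - constructor.
  - econstructor; [constructor; [exact IH | constructor] | constructor].
Qed.

Lemma reval_expr_rf v e :
  expr_vars_lt (length v) e = true -> reval (expr_rf e) v (expr_eval v e).
Proof.
  induction e; cbn [expr_vars_lt expr_rf expr_eval]; intros He;
    rewrite ?Bool.andb_true_iff in He.
  - constructor. now apply Nat.ltb_lt.
  - apply reval_const_rf.
  - econstructor; [repeat constructor; auto | apply rf1_spec].
  - destruct He.
    econstructor; [repeat constructor; auto | apply rf2_spec].
  - destruct He as [[? ?] ?].
    econstructor; [repeat constructor; auto | apply rf3_spec].
Qed.

Lemma reval_expr_rf_eq v e n :
  expr_vars_lt (length v) e = true -> expr_eval v e = n -> reval (expr_rf e) v n.
Proof. intros He <-. now apply reval_expr_rf. Qed.

Ltac reval_expr :=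
  first [ apply reval_expr_rf_eq; reflexivity
        | apply ev_proj; cbn; lia
        | apply ev_zero ].

Lemma reval_RPrim (f g : rf) (h : nat -> nat) (v : list nat) :
  reval f v (h 0) -> (forall n, reval g (n :: h n :: v) (h (S n))) ->
  forall n, reval (RPrim f g) (n :: v) (h n).
Proof.
  intros Hf Hg n; induction n as [|n IH]; [now constructor | econstructor; eauto].
Qed.

Definition succ_c : comp1 := Comp1 RSucc S (fun x => ev_succ x []).

Lemma add_spec x y :
  reval (RPrim (RProj 0) (expr_rf (EApp1 succ_c (EVar 1)))) [x; y] (x + y).
Proof. apply (reval_RPrim _ _ (fun x => x + y)); intros; reval_expr. Qed.
Definition add_c : comp2 := Comp2 _ _ add_spec.

Lemma pred_spec x : reval (RPrim RZero (RProj 0)) [x] (pred x).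
Proof. apply (reval_RPrim _ _ pred); intros; reval_expr. Qed.
Definition pred_c : comp1 := Comp1 _ _ pred_spec.

Lemma sub_spec x y :
  reval (RComp (RPrim (RProj 0) (expr_rf (EApp1 pred_c (EVar 1))))
               [RProj 1; RProj 0]) [x; y] (x - y).
Proof.
  assert (Hr : forall y, reval (RPrim (RProj 0) (expr_rf (EApp1 pred_c (EVar 1))))
                               [y; x] (x - y)).
  { apply (reval_RPrim _ _ (fun y => x - y)).
    - rewrite Nat.sub_0_r. reval_expr.
    - intros n. rewrite Nat.sub_succ_r. reval_expr. }
  econstructor; [repeat constructor; cbn; lia | apply Hr].
Qed.
Definition sub_c : comp2 := Comp2 _ _ sub_spec.

Definition ifz (b x y : nat) : nat := match b with 0 => x | S _ => y end.

Lemma ifz_spec b x y : reval (RPrim (RProj 0) (RProj 3)) [b; x; y] (ifz b x y).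
Proof.
  apply (reval_RPrim _ _ (fun b => ifz b x y)); intros; constructor; cbn; lia.
Qed.
Definition ifz_c : comp3 := Comp3 _ _ ifz_spec.

Fixpoint tri (s : nat) : nat := match s with 0 => 0 | S s => tri s + S s end.

Lemma tri_spec s :
  reval (RPrim RZero (expr_rf (EApp2 add_c (EVar 1) (EApp1 succ_c (EVar 0))))) [s] (tri s).
Proof. apply (reval_RPrim _ _ tri); intros; reval_expr. Qed.
Definition tri_c : comp1 := Comp1 _ _ tri_spec.

Lemma tri_double s : 2 * tri s = s * (s + 1).
Proof. induction s; cbn [tri]; nia. Qed.

Lemma tri_le_mono a b : a <= b -> tri a <= tri b.
Proof. induction 1; cbn [tri]; lia. Qed.

Lemma cpair_tri x y : cpair x y = tri (x + y) + y.
Proof.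
  unfold cpair. rewrite <- tri_double, Nat.mul_comm, Nat.div_mul; lia.
Qed.

Lemma cpair_spec x y :
  reval (expr_rf (EApp2 add_c (EApp1 tri_c (EApp2 add_c (EVar 0) (EVar 1))) (EVar 1)))
        [x; y] (cpair x y).
Proof. rewrite cpair_tri. reval_expr. Qed.
Definition cpair_c : comp2 := Comp2 _ _ cpair_spec.

Lemma cpair_ge x y : x + y <= cpair x y.
Proof.
  rewrite cpair_tri. assert (x + y <= tri (x + y)) by (induction (x + y); cbn; lia). lia.
Qed.

(* [unpair_sum n] is the largest [s] with [tri s <= n]: the Cantor diagonal containing [n]. *)
Fixpoint unpair_sum (n : nat) : nat :=
  match n with
  | 0 => 0
  | S n => ifz (tri (S (unpair_sum n)) - S n) (S (unpair_sum n)) (unpair_sum n)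
  end.

Lemma unpair_sum_spec n :
  reval (RPrim RZero (expr_rf
           (EApp3 ifz_c (EApp2 sub_c (EApp1 tri_c (EApp1 succ_c (EVar 1)))
                                     (EApp1 succ_c (EVar 0)))
                        (EApp1 succ_c (EVar 1)) (EVar 1))))
        [n] (unpair_sum n).
Proof. apply (reval_RPrim _ _ unpair_sum); intros; reval_expr. Qed.
Definition unpair_sum_c : comp1 := Comp1 _ _ unpair_sum_spec.

Lemma unpair_sum_bounds n : tri (unpair_sum n) <= n < tri (S (unpair_sum n)).
Proof.
  induction n as [|n IH]; cbn [unpair_sum tri]; [lia|].
  destruct (tri (unpair_sum n) + S (unpair_sum n) - S n) eqn:E; cbn [ifz tri] in *; lia.
Qed.

Lemma unpair_sum_cpair x y : unpair_sum (cpair x y) = x + y.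
Proof.
  pose proof (unpair_sum_bounds (cpair x y)) as Hb. rewrite cpair_tri in *.
  destruct (Nat.lt_trichotomy (unpair_sum (tri (x + y) + y)) (x + y)) as [H|[H|H]]; auto.
  - pose proof (tri_le_mono _ _ H). cbn [tri] in *. lia.
  - pose proof (tri_le_mono _ _ H). cbn [tri] in *. lia.
Qed.

Definition unpair2 (n : nat) : nat := n - tri (unpair_sum n).
Definition unpair1 (n : nat) : nat := unpair_sum n - unpair2 n.

Lemma unpair2_cpair x y : unpair2 (cpair x y) = y.
Proof. unfold unpair2. rewrite unpair_sum_cpair, cpair_tri. lia. Qed.

Lemma unpair1_cpair x y : unpair1 (cpair x y) = x.
Proof. unfold unpair1. rewrite unpair2_cpair, unpair_sum_cpair. lia. Qed.

Lemma unpair2_spec n :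
  reval (expr_rf (EApp2 sub_c (EVar 0) (EApp1 tri_c (EApp1 unpair_sum_c (EVar 0)))))
        [n] (unpair2 n).
Proof. reval_expr. Qed.
Definition unpair2_c : comp1 := Comp1 _ _ unpair2_spec.

Lemma unpair1_spec n :
  reval (expr_rf (EApp2 sub_c (EApp1 unpair_sum_c (EVar 0)) (EApp1 unpair2_c (EVar 0))))
        [n] (unpair1 n).
Proof. reval_expr. Qed.
Definition unpair1_c : comp1 := Comp1 _ _ unpair1_spec.

(** * Course-of-values recursion *)

(* A history of length [n] is the nested pair [cpair v_(n-1) (cpair ... (cpair v_0 0))];
   [lookup h n m] reads off its entry [v_m]. *)
Definition lookup (h n m : nat) : nat := unpair1 (Nat.iter (n - 1 - m) unpair2 h).

Lemma iter_unpair2_spec k h :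
  reval (RPrim (RProj 0) (expr_rf (EApp1 unpair2_c (EVar 1)))) [k; h]
        (Nat.iter k unpair2 h).
Proof. apply (reval_RPrim _ _ (fun k => Nat.iter k unpair2 h)); intros; reval_expr. Qed.
Definition iter_unpair2_c : comp2 := Comp2 _ _ iter_unpair2_spec.

Lemma lookup_spec h n m :
  reval (expr_rf (EApp1 unpair1_c
           (EApp2 iter_unpair2_c (EApp2 sub_c (EApp2 sub_c (EVar 1) (EConst 1)) (EVar 2))
                                 (EVar 0))))
        [h; n; m] (lookup h n m).
Proof. reval_expr. Qed.
Definition lookup_c : comp3 := Comp3 _ _ lookup_spec.

Section CourseOfValues.

Variable step : comp3.

Fixpoint history (p n : nat) : nat :=
  match n with
  | 0 => 0
  | S n => cpair (fn3 step p n (history p n)) (history p n)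
  end.

Definition cov (p n : nat) : nat := fn3 step p n (history p n).

Lemma lookup_history p n m : m < n -> lookup (history p n) n m = cov p m.
Proof.
  induction n as [|n IH]; intros Hm; [lia|].
  unfold lookup. destruct (Nat.eq_dec m n) as [->|Hne].
  - replace (S n - 1 - n) with 0 by lia. apply unpair1_cpair.
  - replace (S n - 1 - m) with (S (n - 1 - m)) by lia.
    cbn [history]. rewrite Nat.iter_succ_r, unpair2_cpair. apply IH. lia.
Qed.

Lemma history_spec n p :
  reval (RPrim (const_rf 0)
               (expr_rf (EApp2 cpair_c (EApp3 step (EVar 2) (EVar 0) (EVar 1)) (EVar 1))))
        [n; p] (history p n).
Proof.
  apply (reval_RPrim _ _ (history p)); intros; [apply reval_const_rf | reval_expr].
Qed.
Definition history_c : comp2 := Comp2 _ _ history_spec.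

Lemma cov_spec p n :
  reval (expr_rf (EApp1 unpair1_c (EApp2 history_c (EApp1 succ_c (EVar 1)) (EVar 0))))
        [p; n] (cov p n).
Proof.
  replace (cov p n) with (unpair1 (history p (S n))) by apply unpair1_cpair. reval_expr.
Qed.
Definition cov_c : comp2 := Comp2 _ _ cov_spec.

End CourseOfValues.

(** * The reduction *)

Definition FNot (A : fo) : fo := FImp A FBot.
Definition FOr (A B : fo) : fo := FImp (FNot A) B.
Definition FAnd (A B : fo) : fo := FNot (FImp A (FNot B)).
Definition FEx (x : nat) (A : fo) : fo := FNot (FAll x (FNot A)).

Definition linked_fo (u v a b : nat) : fo :=
  FOr (FEq u v) (FEx a (FEx b (FAnd (FRel u a) (FAnd (FRel v b) (FRel a b))))).

Definition outside (g x : nat) : fo := FNot (linked_fo g x (S g) (S (S g))).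

Definition escape (g : nat) : fo := FEx (S (S (S g))) (outside g (S (S (S g)))).

Fixpoint relativize (g : nat) (A : fo) : fo :=
  match A with
  | FImp B C => FImp (relativize g B) (relativize g C)
  | FAll x B => FAll x (FImp (outside g x) (relativize g B))
  | _ => A
  end.

(* [S (code A)] exceeds every variable of [A], so [g] and the auxiliary variables
   [S g], [S (S g)], [S (S (S g))] are fresh for [A]. *)
Definition reduct (A : fo) : fo :=
  let g := S (code A) in FAll g (FImp (escape g) (relativize g A)).

Fixpoint fo_rename (s : nat -> nat) (A : fo) : fo :=
  match A with
  | FEq x y => FEq (s x) (s y)
  | FRel x y => FRel (s x) (s y)
  | FBot => FBot
  | FImp B C => FImp (fo_rename s B) (fo_rename s C)
  | FAll x B => FAll (s x) (fo_rename s B)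
  end.

Fixpoint code_expr (es : list expr) (A : fo) : expr :=
  let var x := nth x es (EConst 0) in
  let tagged t a b := EApp2 cpair_c (EConst t) (EApp2 cpair_c a b) in
  match A with
  | FEq x y => tagged 0 (var x) (var y)
  | FRel x y => tagged 1 (var x) (var y)
  | FBot => EConst (code FBot)
  | FImp B C => tagged 3 (code_expr es B) (code_expr es C)
  | FAll x B => tagged 4 (var x) (code_expr es B)
  end.

Lemma code_expr_eval v es A :
  expr_eval v (code_expr es A) = code (fo_rename (fun x => expr_eval v (nth x es (EConst 0))) A).
Proof. induction A; cbn -[cpair]; congruence. Qed.

Lemma reval_code_expr v es A :
  expr_vars_lt (length v) (code_expr es A) = true ->
  reval (expr_rf (code_expr es A)) v
        (code (fo_rename (fun x => expr_eval v (nth x es (EConst 0))) A)).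
Proof. rewrite <- code_expr_eval. apply reval_expr_rf. Qed.

(* [outside g x] and [escape g] are renamings of templates whose variables are pairwise
   distinct, so their codes are given by [code_expr]. *)
Definition outside_code_c : comp2 :=
  Comp2 _ (fun g x => code (outside g x))
    (fun g x => reval_code_expr [g; x]
       [EVar 0; EVar 1; EApp1 succ_c (EVar 0); EApp1 succ_c (EApp1 succ_c (EVar 0))]
       (FNot (linked_fo 0 1 2 3)) eq_refl).

Definition escape_code_c : comp1 :=
  Comp1 _ (fun g => code (escape g))
    (fun g => reval_code_expr [g]
       [EVar 0; EApp1 succ_c (EVar 0); EApp1 succ_c (EApp1 succ_c (EVar 0));
        EApp1 succ_c (EApp1 succ_c (EApp1 succ_c (EVar 0)))]
       (FEx 3 (FNot (linked_fo 0 3 1 2))) eq_refl).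

(* One step of [relativize g] on codes: [h] is the history of the results on all smaller codes. *)
Definition relativize_step (g c h : nat) : nat :=
  let tag := unpair1 c in
  let x := unpair1 (unpair2 c) in
  let y := unpair2 (unpair2 c) in
  ifz (tag - 3)
      (ifz (tag - 2) c (cpair 3 (cpair (lookup h c x) (lookup h c y))))
      (cpair 4 (cpair x (cpair 3 (cpair (code (outside g x)) (lookup h c y))))).

Definition relativize_step_expr : expr :=
  let tag := EApp1 unpair1_c (EVar 1) in
  let x := EApp1 unpair1_c (EApp1 unpair2_c (EVar 1)) in
  let y := EApp1 unpair2_c (EApp1 unpair2_c (EVar 1)) in
  let imp a b := EApp2 cpair_c (EConst 3) (EApp2 cpair_c a b) in
  EApp3 ifz_c (EApp2 sub_c tag (EConst 3))
    (EApp3 ifz_c (EApp2 sub_c tag (EConst 2)) (EVar 1)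
       (imp (EApp3 lookup_c (EVar 2) (EVar 1) x) (EApp3 lookup_c (EVar 2) (EVar 1) y)))
    (EApp2 cpair_c (EConst 4)
       (EApp2 cpair_c x (imp (EApp2 outside_code_c (EVar 0) x)
                             (EApp3 lookup_c (EVar 2) (EVar 1) y)))).

Lemma relativize_step_spec g c h :
  reval (expr_rf relativize_step_expr) [g; c; h] (relativize_step g c h).
Proof. reval_expr. Qed.
Definition relativize_step_c : comp3 := Comp3 _ _ relativize_step_spec.

Lemma relativize_step_atomic g t b h :
  t <= 2 -> relativize_step g (cpair t b) h = cpair t b.
Proof.
  intros Ht. unfold relativize_step. cbv zeta. rewrite unpair1_cpair.
  replace (t - 3) with 0 by lia. replace (t - 2) with 0 by lia. reflexivity.
Qed.

Lemma relativize_step_imp g a b h :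
  relativize_step g (cpair 3 (cpair a b)) h =
  cpair 3 (cpair (lookup h (cpair 3 (cpair a b)) a) (lookup h (cpair 3 (cpair a b)) b)).
Proof.
  unfold relativize_step. cbv zeta. rewrite !unpair2_cpair, !unpair1_cpair. reflexivity.
Qed.

Lemma relativize_step_all g x a h :
  relativize_step g (cpair 4 (cpair x a)) h =
  cpair 4 (cpair x (cpair 3 (cpair (code (outside g x)) (lookup h (cpair 4 (cpair x a)) a)))).
Proof.
  unfold relativize_step. cbv zeta. rewrite !unpair2_cpair, !unpair1_cpair. reflexivity.
Qed.

Lemma cov_relativize_step g A :
  cov relativize_step_c g (code A) = code (relativize g A).
Proof.
  induction A as [x y|x y| |B IHB C IHC|x B IHB];
    unfold cov at 1; cbn [fn3 relativize_step_c code relativize].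
  - apply relativize_step_atomic; lia.
  - apply relativize_step_atomic; lia.
  - apply relativize_step_atomic; lia.
  - pose proof (cpair_ge 3 (cpair (code B) (code C))).
    pose proof (cpair_ge (code B) (code C)).
    rewrite relativize_step_imp, !lookup_history, IHB, IHC by lia. reflexivity.
  - pose proof (cpair_ge 4 (cpair x (code B))).
    pose proof (cpair_ge x (code B)).
    rewrite relativize_step_all, lookup_history, IHB by lia. reflexivity.
Qed.

Lemma reduct_code_spec A :
  reval (expr_rf (EApp2 cpair_c (EConst 4) (EApp2 cpair_c (EApp1 succ_c (EVar 0))
          (EApp2 cpair_c (EConst 3) (EApp2 cpair_c (EApp1 escape_code_c (EApp1 succ_c (EVar 0)))
             (EApp2 (cov_c relativize_step_c) (EApp1 succ_c (EVar 0)) (EVar 0)))))))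
        [code A] (code (reduct A)).
Proof.
  unfold reduct; cbn [code]. rewrite <- (cov_relativize_step (S (code A))). reval_expr.
Qed.

Lemma fo_decidable_reduction (P Q : fo -> Prop) (r : fo -> fo) (t : rf) :
  (forall A, reval t [code A] (code (r A))) ->
  (forall A, sentence A -> sentence (r A)) ->
  (forall A, sentence A -> (P A <-> Q (r A))) ->
  fo_decidable Q -> fo_decidable P.
Proof.
  intros Ht Hs HPQ [f Hf]. exists (RComp f [t]). intros A HA.
  destruct (Hf (r A) (Hs A HA)) as [Hyes Hno]. rewrite HPQ by exact HA.
  split; intros H; (econstructor; [repeat constructor; apply Ht |]); auto.
Qed.

(** * Frames of Euclidean logics *)

Definition euclidean (F : frame) : Prop :=
  forall x y z, fR F x y -> fR F x z -> fR F y z.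

Lemma Fr_euclidean L F : euclidean_logic L -> Fr L F -> euclidean F.
Proof.
  intros (_ & _ & H5) HF x y z Hxy Hxz.
  destruct (HF _ (H5 (MVar 0)) (fun _ w => w = z) x) as [Hno|Hbox].
  - exfalso. apply Hno. intros Hall. exact (Hall z Hxz eq_refl).
  - apply NNPP. intros Hyz. apply (Hbox y Hxy). intros u Hyu ->. exact (Hyz Hyu).
Qed.

(* In a Euclidean frame this is an equivalence whose classes are the connected components. *)
Definition linked (F : frame) (x y : fW F) : Prop :=
  x = y \/ exists p q, fR F x p /\ fR F y q /\ fR F p q.

Lemma linked_refl F x : linked F x x.
Proof. now left. Qed.

Section Linked.

Variable F : frame.
Hypothesis HE : euclidean F.

Lemma linked_sym x y : linked F x y -> linked F y x.
Proof.
  intros [->|(p & q & Hp & Hq & Hpq)]; [now left|].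
  right. exists q, p. repeat split; auto. exact (HE p q p Hpq (HE x p p Hp Hp)).
Qed.

Lemma linked_trans x y z : linked F x y -> linked F y z -> linked F x z.
Proof.
  intros [->|(a & b & Ha & Hb & Hab)]; auto.
  intros [<-|(c & d & Hc & Hd & Hcd)]; [right; eauto|].
  right. exists a, d. repeat split; auto.
  assert (Haa : fR F a a) by exact (HE x a a Ha Ha).
  assert (Hbd : fR F b d) by exact (HE c b d (HE y c b Hc Hb) Hcd).
  exact (HE b a d (HE a b a Hab Haa) Hbd).
Qed.

Lemma linked_R x y : fR F x y -> linked F x y.
Proof. intros Hxy. right. exists y, y. pose proof (HE x y y Hxy Hxy). auto. Qed.

Lemma linked_R_forward x y z : linked F x y -> fR F y z -> linked F x z.
Proof. intros Hxy Hyz. apply (linked_trans _ y); auto using linked_R. Qed.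

Lemma linked_R_backward x y z : linked F x z -> fR F y z -> linked F x y.
Proof. intros Hxz Hyz. apply (linked_trans _ z); auto using linked_sym, linked_R. Qed.

End Linked.

Definition generated_embedding (G F : frame) (e : fW G -> fW F) : Prop :=
  (forall a b, e a = e b -> a = b) /\
  (forall a b, fR G a b <-> fR F (e a) (e b)) /\
  (forall a y, fR F (e a) y -> exists b, y = e b).

Lemma msat_generated_embedding G F e V V' :
  generated_embedding G F e -> (forall n a, V n a <-> V' n (e a)) ->
  forall phi w, msat G V w phi <-> msat F V' (e w) phi.
Proof.
  intros (_ & HR & Hgen) HV phi. induction phi as [n| |phi IH|phi IH psi IH'|phi IH];
    intros w; cbn [msat].
  - apply HV.
  - reflexivity.
  - rewrite IH. reflexivity.
  - rewrite IH, IH'. tauto.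
  - split; intros H.
    + intros y Hy. destruct (Hgen _ _ Hy) as [b ->]. apply IH, H, HR, Hy.
    + intros u Hu. apply IH, H, HR, Hu.
Qed.

Lemma mvalid_generated_embedding G F e phi :
  generated_embedding G F e -> mvalid F phi -> mvalid G phi.
Proof.
  intros He Hphi V w.
  apply (msat_generated_embedding G F e V (fun n y => exists a, y = e a /\ V n a) He).
  - intros n a. split; [eauto|]. intros [b [Hb HV]]. destruct He as [Hinj _].
    now rewrite (Hinj _ _ Hb).
  - apply Hphi.
Qed.

Lemma mvalid_of_cover F phi :
  (forall y, exists G e w, generated_embedding G F e /\ e w = y /\ mvalid G phi) ->
  mvalid F phi.
Proof.
  intros Hcov V y. destruct (Hcov y) as (G & e & w & He & <- & Hphi).
  apply (msat_generated_embedding G F e (fun n a => V n (e a)) V He); [tauto|apply Hphi].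
Qed.

Lemma Fr_generated_embedding L G F e :
  generated_embedding G F e -> Fr L F -> Fr L G.
Proof.
  intros He HF phi Hphi. exact (mvalid_generated_embedding G F e phi He (HF phi Hphi)).
Qed.

Lemma linked_generated_embedding G F e a b :
  generated_embedding G F e -> linked F (e a) (e b) -> linked G a b.
Proof.
  intros (Hinj & HR & Hgen) [Hab|(p & q & Hp & Hq & Hpq)]; [left; auto|right].
  destruct (Hgen _ _ Hp) as [p' ->], (Hgen _ _ Hq) as [q' ->].
  exists p', q'. rewrite !HR. auto.
Qed.

Lemma linked_image G F (e : fW G -> fW F) a b :
  (forall a b, fR G a b -> fR F (e a) (e b)) -> linked G a b -> linked F (e a) (e b).
Proof.
  intros HR [->|(p & q & Hp & Hq & Hpq)]; [left; auto|right].
  exists (e p), (e q). auto.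
Qed.

Definition subframe (F : frame) (P : fW F -> Prop) (w : fW F) (Hw : P w) : frame :=
  {| fW := {y | P y};
     fR := fun a b => fR F (proj1_sig a) (proj1_sig b);
     fW_inhabited := inhabits (exist P w Hw) |}.

Lemma subframe_embedding F P w Hw :
  (forall x y, P x -> fR F x y -> P y) ->
  generated_embedding (subframe F P w Hw) F (@proj1_sig _ P).
Proof.
  intros Hclosed. split; [|split].
  - intros [a Ha] [b Hb]; cbn. intros ->. f_equal. apply proof_irrelevance.
  - reflexivity.
  - intros [a Ha] y Hy. now exists (exist P y (Hclosed a y Ha Hy)).
Qed.

Definition component (F : frame) (w : fW F) : frame :=
  subframe F (linked F w) w (linked_refl F w).

Lemma component_embedding F w :
  euclidean F -> generated_embedding (component F w) F (@proj1_sig _ (linked F w)).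
Proof. intros HE. apply subframe_embedding. intros x y. now apply linked_R_forward. Qed.

Lemma Fr_component L F w : euclidean F -> Fr L F -> Fr L (component F w).
Proof. intros HE. exact (Fr_generated_embedding L _ F _ (component_embedding F w HE)). Qed.

Lemma component_linked F w (d e : fW (component F w)) :
  euclidean F -> linked (component F w) d e.
Proof.
  intros HE. apply (linked_generated_embedding _ _ _ _ _ (component_embedding F w HE)).
  destruct d as [d Hd], e as [e He]; cbn.
  apply (linked_trans F HE d w e); [apply linked_sym|]; auto.
Qed.

Definition frame_sum (F1 F2 : frame) : frame :=
  {| fW := (fW F1 + fW F2)%type;
     fR := fun a b => match a, b with
                      | inl x, inl y => fR F1 x y
                      | inr x, inr y => fR F2 x y
                      | _, _ => False
                      end;
     fW_inhabited := let (x) := fW_inhabited F1 in inhabits (inl x) |}.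

Lemma inl_embedding F1 F2 : generated_embedding F1 (frame_sum F1 F2) inl.
Proof.
  split; [|split].
  - congruence.
  - reflexivity.
  - intros a [y|y] Hy; [eauto|contradiction].
Qed.

Lemma inr_embedding F1 F2 : generated_embedding F2 (frame_sum F1 F2) inr.
Proof.
  split; [|split].
  - congruence.
  - reflexivity.
  - intros a [y|y] Hy; [contradiction|eauto].
Qed.

Lemma Fr_frame_sum L F1 F2 : Fr L F1 -> Fr L F2 -> Fr L (frame_sum F1 F2).
Proof.
  intros H1 H2 phi Hphi. apply mvalid_of_cover. intros [y|y].
  - exists F1, inl, y. split; [apply inl_embedding|auto].
  - exists F2, inr, y. split; [apply inr_embedding|auto].
Qed.

Lemma not_linked_inr_inl F1 F2 a b : ~ linked (frame_sum F1 F2) (inr a) (inl b).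
Proof.
  intros [Hab|([p|p] & [q|q] & Hp & Hq & Hpq)]; cbn in *; congruence || contradiction.
Qed.

(** * Semantics of the reduction *)

Lemma fsat_FOr F rho A B : fsat F rho (FOr A B) <-> fsat F rho A \/ fsat F rho B.
Proof. cbn. destruct (classic (fsat F rho A)); tauto. Qed.

Lemma fsat_FAnd F rho A B : fsat F rho (FAnd A B) <-> fsat F rho A /\ fsat F rho B.
Proof. cbn. destruct (classic (fsat F rho A)), (classic (fsat F rho B)); tauto. Qed.

Lemma fsat_FEx F rho x A :
  fsat F rho (FEx x A) <-> exists d, fsat F (fun y => if y =? x then d else rho y) A.
Proof.
  cbn. split.
  - intros H. apply NNPP. intros Hno. apply H. intros d Hd. apply Hno. eauto.
  - intros [d Hd] H. exact (H d Hd).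
Qed.

Lemma fsat_linked_fo F rho u v a b :
  a <> u -> a <> v -> b <> u -> b <> v -> a <> b ->
  fsat F rho (linked_fo u v a b) <-> linked F (rho u) (rho v).
Proof.
  intros Hau Hav Hbu Hbv Hab. unfold linked_fo, linked.
  rewrite fsat_FOr, fsat_FEx. setoid_rewrite fsat_FEx. repeat setoid_rewrite fsat_FAnd.
  cbn [fsat].
  rewrite !Nat.eqb_refl, (proj2 (Nat.eqb_neq u a)), (proj2 (Nat.eqb_neq u b)),
    (proj2 (Nat.eqb_neq v a)), (proj2 (Nat.eqb_neq v b)), (proj2 (Nat.eqb_neq a b)) by auto.
  reflexivity.
Qed.

Lemma fsat_outside F rho g x :
  x <> S g -> x <> S (S g) ->
  fsat F rho (outside g x) <-> ~ linked F (rho g) (rho x).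
Proof. intros. unfold outside. cbn [FNot fsat]. rewrite fsat_linked_fo by lia. reflexivity. Qed.

Lemma fsat_escape F rho g :
  fsat F rho (escape g) <-> exists y, ~ linked F (rho g) y.
Proof.
  unfold escape. rewrite fsat_FEx. setoid_rewrite fsat_outside; [|lia..].
  rewrite Nat.eqb_refl, (proj2 (Nat.eqb_neq g (S (S (S g))))) by lia. reflexivity.
Qed.

Fixpoint binders_below (g : nat) (A : fo) : Prop :=
  match A with
  | FImp B C => binders_below g B /\ binders_below g C
  | FAll x B => x < g /\ binders_below g B
  | _ => True
  end.

Lemma binders_below_mono A g g' : binders_below g A -> g <= g' -> binders_below g' A.
Proof. induction A; cbn; intuition lia. Qed.

Lemma binders_below_code A : binders_below (S (code A)) A.
Proof.
  induction A as [| | |B IHB C IHC|x B IHB]; cbn [binders_below code]; auto.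
  - pose proof (cpair_ge 3 (cpair (code B) (code C))).
    pose proof (cpair_ge (code B) (code C)).
    split; eapply binders_below_mono; eauto; lia.
  - pose proof (cpair_ge 4 (cpair x (code B))).
    pose proof (cpair_ge x (code B)).
    split; [|eapply binders_below_mono; eauto]; lia.
Qed.

Lemma fsat_relativize K H (e : fW K -> fW H) (g0 : fW H) :
  generated_embedding K H e ->
  (forall y, ~ linked H g0 y <-> exists a, y = e a) ->
  forall A g, binders_below g A ->
  forall rho sigma, rho g = g0 -> (forall z, In z (fv A) -> rho z = e (sigma z)) ->
  fsat H rho (relativize g A) <-> fsat K sigma A.
Proof.
  intros (Hinj & HR & _) Himg A. induction A as [x y|x y| |B IHB C IHC|x B IHB];
    intros g Hg rho sigma Hrho Hfv; cbn [relativize fsat binders_below fv] in *.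
  - rewrite !Hfv by (cbn; auto). split; [apply Hinj|congruence].
  - rewrite !Hfv by (cbn; auto). apply iff_sym, HR.
  - reflexivity.
  - destruct Hg as [HgB HgC].
    rewrite (IHB g HgB rho sigma), (IHC g HgC rho sigma); auto using in_or_app. reflexivity.
  - destruct Hg as [Hx HgB].
    assert (Hgx : (g =? x) = false) by (apply Nat.eqb_neq; lia).
    assert (Hupd : forall a z, In z (fv B) ->
              (if z =? x then e a else rho z) = e (if z =? x then a else sigma z)).
    { intros a z Hz. destruct (Nat.eqb_spec z x); auto.
      apply Hfv, filter_In. split; auto. now apply Bool.negb_true_iff, Nat.eqb_neq. }
    split.
    + intros Hall a. specialize (Hall (e a)). rewrite fsat_outside in Hall by lia.
      rewrite Hgx, Nat.eqb_refl, Hrho in Hall.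
      rewrite <- (IHB g HgB (fun y => if y =? x then e a else rho y)); [|now rewrite Hgx|].
      * apply Hall, Himg. eauto.
      * apply Hupd.
    + intros Hall d Hout. rewrite fsat_outside in Hout by lia.
      rewrite Hgx, Nat.eqb_refl, Hrho in Hout.
      destruct (proj1 (Himg d) Hout) as [a ->].
      rewrite (IHB g HgB _ (fun y => if y =? x then a else sigma y));
        [apply Hall|now rewrite Hgx|apply Hupd].
Qed.

Ltac destruct_In :=
  repeat match goal with
  | H : In _ (_ ++ _) |- _ => apply in_app_or in H; destruct H
  | H : In _ (filter _ _) |- _ => apply filter_In in H; destruct H
  | H : In _ (_ :: _) |- _ => destruct H
  | H : In _ [] |- _ => destruct H
  end.

Lemma fv_linked_fo z u v a b : In z (fv (linked_fo u v a b)) -> z = u \/ z = v.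
Proof.
  cbn [linked_fo FOr FEx FAnd FNot fv]. intros Hz.
  destruct_In; subst; auto; rewrite ?Nat.eqb_refl in *; discriminate.
Qed.

Lemma fv_outside z g x : In z (fv (outside g x)) -> z = g \/ z = x.
Proof. cbn [outside FNot fv]. rewrite app_nil_r. apply fv_linked_fo. Qed.

Lemma fv_escape z g : In z (fv (escape g)) -> z = g.
Proof.
  cbn [escape FEx FNot fv]. rewrite !app_nil_r. intros Hz. destruct_In.
  apply fv_outside in H. destruct H; subst; auto. rewrite Nat.eqb_refl in *; discriminate.
Qed.

Lemma fv_relativize z g A : In z (fv (relativize g A)) -> In z (fv A) \/ z = g.
Proof.
  induction A as [| | |B IHB C IHC|x B IHB]; cbn [relativize fv]; auto;
    intros Hz; destruct_In.
  - destruct (IHB H); auto using in_or_app.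
  - destruct (IHC H); auto using in_or_app.
  - apply fv_outside in H. destruct H; auto. subst. rewrite Nat.eqb_refl in *; discriminate.
  - destruct (IHB H); auto. left. apply filter_In. auto.
Qed.

Lemma reduct_sentence A : sentence A -> sentence (reduct A).
Proof.
  unfold sentence. intros HA. destruct (fv (reduct A)) as [|z zs] eqn:E; auto.
  assert (Hz : In z (fv (reduct A))) by (rewrite E; now left).
  cbn [reduct fv] in Hz. destruct_In.
  - apply fv_escape in H. subst. rewrite Nat.eqb_refl in *; discriminate.
  - apply fv_relativize in H. rewrite HA in H. destruct H as [[]| ->].
    rewrite Nat.eqb_refl in *; discriminate.
Qed.

Section EuclideanLogic.

Variable L : mform -> Prop.
Hypothesis HL : euclidean_logic L.

Lemma reduct_valid_of_Th A :
  sentence A -> Th (Fr L) A -> forall F, Fr L F -> fvalid F (reduct A).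
Proof.
  intros HA [_ HTh] F HF rho. pose proof (Fr_euclidean L F HL HF) as HE.
  unfold reduct; cbn [fsat]. intros d Hesc.
  rewrite fsat_escape, Nat.eqb_refl in Hesc. destruct Hesc as [w Hw].
  set (P := fun y => ~ linked F d y).
  assert (HP : forall x y, P x -> fR F x y -> P y).
  { intros x y Hx Hxy Hy. apply Hx. now apply (linked_R_backward F HE d x y). }
  apply (fsat_relativize (subframe F P w Hw) F (@proj1_sig _ P) d
           (subframe_embedding F P w Hw HP)) with (sigma := fun _ => exist P w Hw).
  - intros y. split; [intros Hy; now exists (exist P y Hy)|intros [[a Ha] ->]; exact Ha].
  - apply binders_below_code.
  - now rewrite Nat.eqb_refl.
  - rewrite HA. intros z [].
  - apply HTh, (Fr_generated_embedding L _ F _ (subframe_embedding F P w Hw HP) HF).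
Qed.

Lemma reduct_valid_component A F w : euclidean F -> fvalid (component F w) (reduct A).
Proof.
  intros HE rho. unfold reduct; cbn [fsat]. intros d Hesc. exfalso.
  rewrite fsat_escape in Hesc. destruct Hesc as [e He]. apply He, component_linked, HE.
Qed.

Lemma reduct_valid_of_definable A :
  modally_definable_in (Fr L) (reduct A) -> forall F, Fr L F -> fvalid F (reduct A).
Proof.
  intros [psi Hpsi].
  assert (Hvalid : forall F, Fr L F -> mvalid F psi).
  { intros F HF. pose proof (Fr_euclidean L F HL HF) as HE.
    apply mvalid_of_cover. intros y.
    exists (component F y), (@proj1_sig _ _), (exist _ y (linked_refl F y)).
    split; [now apply component_embedding|split; [reflexivity|]].
    apply Hpsi; [now apply Fr_component|now apply reduct_valid_component]. }
  intros F HF. apply Hpsi; auto.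
Qed.

(* Glue a copy of one component of [G] next to [G]: seen from that copy, the
   points outside its component are exactly the points of [G]. *)
Lemma Th_of_reduct_valid A :
  sentence A -> (forall F, Fr L F -> fvalid F (reduct A)) -> Th (Fr L) A.
Proof.
  intros HA Hred. split; [exact HA|]. intros G HG rho.
  pose proof (Fr_euclidean L G HL HG) as HE. destruct (fW_inhabited G) as [w].
  set (C := component G w).
  set (t0 := exist (linked G w) w (linked_refl G w) : fW C).
  set (H := frame_sum G C).
  assert (HH : Fr L H) by (apply Fr_frame_sum; [|apply Fr_component]; auto).
  assert (Hesc : fsat H (fun y => if y =? S (code A) then inr t0 else inr t0)
                   (escape (S (code A)))).
  { rewrite fsat_escape, Nat.eqb_refl. exists (inl w). apply not_linked_inr_inl. }
  apply (fsat_relativize G H inl (inr t0) (inl_embedding G C)) with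
    (g := S (code A)) (rho := fun y => if y =? S (code A) then inr t0 else inr t0).
  - intros [a|t]; split; eauto using not_linked_inr_inl.
    + intros Hno. exfalso. apply Hno.
      apply (linked_image C H inr); [auto|apply component_linked, HE].
    + intros [a Ha]. discriminate.
  - apply binders_below_code.
  - now rewrite Nat.eqb_refl.
  - rewrite HA. intros z [].
  - exact (Hred H HH (fun _ => inr t0) (inr t0) Hesc).
Qed.

Lemma Th_iff_reduct_definable A :
  sentence A -> Th (Fr L) A <-> modally_definable_in (Fr L) (reduct A).
Proof.
  intros HA. split.
  - intros HTh. exists (MNeg MBot). intros F HF.
    split; [intros _; now apply reduct_valid_of_Th|intros _ V w; cbn; auto].
  - intros Hdef. apply Th_of_reduct_valid; auto. now apply reduct_valid_of_definable.
Qed.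

End EuclideanLogic.

Theorem lemma52 (L : mform -> Prop) (HL : euclidean_logic L) :
  ~ fo_decidable (Th (Fr L)) ->
  ~ fo_decidable (modally_definable_in (Fr L)).
Proof.
  intros Hundec Hdec. apply Hundec.
  exact (fo_decidable_reduction _ _ reduct _ reduct_code_spec reduct_sentence
           (Th_iff_reduct_definable L HL) Hdec).
Qed.
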